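(* There is a universal constant $C>0$ such that for every finite set $\mathcal{W}$ and every probability vector $\mathbf{P}=(P_w)_{w\in\mathcal{W}}$, $$\mathbb{E}_{Y\sim U(0,1)}\big(f_{1,\mathbf{P}}(Y)-1\big)^2\le C\,|\mathcal{W}|\,(1-\max_wP_w),$$ where $f_{1,\mathbf{P}}(r)=\sum_{w:P_w>0}r^{1/P_w-1}$.
   Context: $f_{1,\mathbf{P}}$ is the density on $[0,1]$ of the distribution with CDF $F_{1,\mathbf{P}}(r)=\sum_wP_wr^{1/P_w}$. *)

From HB Require Import structures.
From mathcomp Require Import all_boot all_order all_algebra.
From mathcomp Require Import all_classical all_reals all_analysis.
From mathcomp Require Import Rstruct Rstruct_topology.
Set Implicit Arguments. Unset Strict Implicit. Unset Printing Implicit Defensive.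
Import Order.TTheory GRing.Theory Num.Theory.
Local Open Scope ring_scope.

Definition prob_vec (R : realType) (W : finType) (P : W -> R) : Prop :=
  (forall w, 0 <= P w) /\ \sum_(w : W) P w = 1.

(* f_{1,P}(r) = sum_{w : P_w > 0} r^(1/P_w - 1), with powR (0 `^ 0 = 1). *)
Definition f1P (R : realType) (W : finType) (P : W -> R) (r : R) : R :=
  \sum_(w : W | 0 < P w) r `^ ((P w)^-1 - 1).

(* max_w P_w (the P_w are nonnegative, so 0 is a neutral start). *)
Definition maxP (R : realType) (W : finType) (P : W -> R) : R :=
  \big[Num.max/0]_(w : W) P w.

From HB Require Import structures.
From mathcomp Require Import all_boot all_order all_algebra.
From mathcomp Require Import all_classical all_reals all_analysis.
From mathcomp Require Import Rstruct Rstruct_topology.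
From mathcomp Require Import measurable_realfun.
From mathcomp Require Import ring lra.
Import Order.TTheory GRing.Theory Num.Theory.
Import numFieldNormedType.Exports.
Local Open Scope classical_set_scope.
Local Open Scope ring_scope.

(* Let w0 maximize P. On [0, 1] write f_{1,P}(y) = t + g with t = y^(1/P_w0 - 1)
   and g the sum of the other terms; then 0 <= t <= 1 and 0 <= g <= |W|, so
   (t + g - 1)^2 <= 2 (1 - t)^2 + 2 g^2 <= 2 (1 - t) + 2 |W| g.  Since
   int_0^1 y^(1/p - 1) dy = p, both 1 - t and g integrate to 1 - P_w0. *)

Lemma sqr_add_subr1_le (R : realFieldType) (t g n : R) :
  0 <= t <= 1 -> 0 <= g <= n -> (t + g - 1) ^+ 2 <= 2 * (1 - t) + 2 * n * g.
Proof. by move=> /andP[t0 t1] /andP[g0 gn]; nra. Qed.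

Section powR_unit_interval.
Variable R : realType.
Local Notation mu := (@lebesgue_measure R).

Lemma powR_le1 (x a : R) : 0 <= x <= 1 -> 0 <= a -> x `^ a <= 1.
Proof.
move=> /andP[x0 x1] a0; have [->|xn0] := eqVneq x 0.
  by have [->|an0] := eqVneq a 0; rewrite ?powRr0 ?powR0.
have xp : 0 < x by rewrite lt_neqAle eq_sym xn0 x0.
by rewrite -(powRr0 x); apply: ger_powR => //; rewrite xp x1.
Qed.

Lemma sum_powR_le_card (I : finType) (Q : pred I) (a : I -> R) (x : R) :
  0 <= x <= 1 -> (forall i, Q i -> 0 <= a i) ->
  \sum_(i | Q i) x `^ a i <= #|I|%:R.
Proof.
move=> x01 a0; rewrite -sum1_card natr_sum big_mkcond /=.
apply: ler_sum => i _; case: ifPn => [Qi|_]; last exact: ler01.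
exact: powR_le1 (a0 _ Qi).
Qed.

Lemma measurable_sum_powR (I : finType) (Q : pred I) (a : I -> R) :
  measurable_fun setT (fun x : R => \sum_(i | Q i) x `^ a i).
Proof.
under eq_fun do rewrite big_mkcond /=.
by apply: measurable_sum => i; case: (Q i); [exact: measurable_powR|exact: measurable_cst].
Qed.

Lemma powR_derivable_oo_LRcontinuous (a : R) : 0 <= a ->
  derivable_oo_LRcontinuous (fun x : R => x `^ a) 0 1.
Proof.
move=> a0; split.
- by move=> x; rewrite in_itv/= => /andP[x0 _]; apply: derivable_powR; rewrite in_itv/= x0.
- have [->|an0] := eqVneq a 0.
    under eq_fun do rewrite powRr0; rewrite powRr0; exact: cvg_cst.
  by rewrite /= powR0//; apply: powR_cvg0; rewrite lt_neqAle eq_sym an0.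
- have c1 : {for 1, continuous (fun x : R => x `^ a)}.
    apply: differentiable_continuous; rewrite -derivable1_diffP.
    by apply: derivable_powR; rewrite in_itv/= ltr01.
  exact: cvg_at_left_filter c1.
Qed.

Lemma integral_itv01_powR (a : R) : 0 <= a ->
  (\int[mu]_(x in `[0%R, 1%R]) (x `^ a)%:E = ((a + 1)^-1)%:E)%E.
Proof.
move=> a0; have a1 : 0 < a + 1 by rewrite ltr_wpDl.
rewrite (@continuous_FTC2 _ _ (fun x => x `^ (a + 1) * (a + 1)^-1))//=.
- by rewrite powR1 mul1r powR0 ?mul0r ?oppr0 ?adde0 // gt_eqF.
- exact/derivable_oo_LRcontinuous_within/powR_derivable_oo_LRcontinuous.
- have [d c0 c1] := @powR_derivable_oo_LRcontinuous _ (ltW a1).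
  by split; [move=> x x01; apply: derivableM => //; exact: d|
             exact: cvgMl c0|exact: cvgMl c1].
- move=> x; rewrite in_itv/= => /andP[x0 _].
  rewrite derive1Mr; last by apply: derivable_powR; rewrite in_itv/= x0.
  by rewrite powR_derive1 ?in_itv/= ?x0// addrK mulrAC divff ?mul1r// gt_eqF.
Qed.

Lemma integral_itv01_onem_powR (a : R) : 0 <= a ->
  (\int[mu]_(x in `[0%R, 1%R]) (1 - x `^ a)%:E = (1 - (a + 1)^-1)%:E)%E.
Proof.
move=> a0; have powR01 x : x \in `[0%R, 1%R] -> 0 <= x `^ a <= 1.
  by rewrite in_itv/= => x01; rewrite powR_ge0 powR_le1.
have mpowR : measurable_fun (`[0%R, 1%R] : set R) (fun x : R => x `^ a).
  exact: measurable_funTS (measurable_powR _).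
have sum1 : (\int[mu]_(x in `[0%R, 1%R]) (1 - x `^ a)%:E +
             \int[mu]_(x in `[0%R, 1%R]) (x `^ a)%:E = 1)%E.
  rewrite -ge0_integralD//; first 1 last.
  - by move=> x /= /powR01 /andP[_ x1]; rewrite lee_fin subr_ge0.
  - exact/measurable_EFinP/measurable_funB.
  - by move=> x /= /powR01 /andP[x0 _]; rewrite lee_fin.
  - exact/measurable_EFinP.
  under eq_integral do rewrite -EFinD subrK.
  rewrite integral_cst/=; last exact: measurable_itv.
  by rewrite mul1e lebesgue_measure_itv/= lte_fin ltr01 -EFinD subr0.
by rewrite integral_itv01_powR// in sum1; rewrite EFinB -sum1 addeK.
Qed.

Lemma integral_itv01_sum_powR (I : finType) (Q : pred I) (a : I -> R) :
  (forall i, Q i -> 0 <= a i) ->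
  (\int[mu]_(x in `[0%R, 1%R]) (\sum_(i | Q i) x `^ a i)%:E =
    (\sum_(i | Q i) (a i + 1)^-1)%:E)%E.
Proof.
move=> a0; under eq_integral do rewrite -sumEFin -big_filter.
rewrite ge0_integral_sum //; last 2 first.
- by move=> i; apply/measurable_EFinP; exact: measurable_funTS (measurable_powR _).
- by move=> i x _; rewrite lee_fin powR_ge0.
rewrite big_filter -sumEFin; apply: eq_bigr => i Qi.
exact: integral_itv01_powR (a0 _ Qi).
Qed.

End powR_unit_interval.

Section integral_le_lincomb.
Variables (d : measure_display) (T : measurableType d) (R : realType).
Variables (mu : {measure set T -> \bar R}) (D : set T) (mD : measurable D).
Variables (f g h : T -> R) (a b : R).
Hypotheses (mf : measurable_fun D f) (mg : measurable_fun D g)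
  (mh : measurable_fun D h).
Hypotheses (a0 : 0 <= a) (b0 : 0 <= b).
Hypotheses (f0 : forall x, D x -> 0 <= f x) (g0 : forall x, D x -> 0 <= g x)
  (h0 : forall x, D x -> 0 <= h x).
Hypothesis f_le : forall x, D x -> f x <= a * g x + b * h x.

Lemma ge0_integral_le_lincomb :
  (\int[mu]_(x in D) (f x)%:E <=
    a%:E * \int[mu]_(x in D) (g x)%:E + b%:E * \int[mu]_(x in D) (h x)%:E)%E.
Proof.
have mZ (k : R) (u : T -> R) : measurable_fun D u ->
    measurable_fun D (fun x => k%:E * (u x)%:E)%E.
  move=> mu_; under eq_fun do rewrite -EFinM.
  by apply/measurable_EFinP/measurable_funM => //; exact: measurable_cst.
have mEg : measurable_fun D (EFin \o g) by exact/measurable_EFinP.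
have mEh : measurable_fun D (EFin \o h) by exact/measurable_EFinP.
have mZg := mZ a _ mg; have mZh := mZ b _ mh.
rewrite -!ge0_integralZl_EFin// -ge0_integralD//; first last.
- by move=> x Dx; rewrite -EFinM lee_fin mulr_ge0 ?h0.
- by move=> x Dx; rewrite -EFinM lee_fin mulr_ge0 ?g0.
apply: ge0_le_integral => //.
- exact/measurable_EFinP.
- exact: emeasurable_funD.
Qed.

End integral_le_lincomb.

Section prob_vec.
Context {R : realType} {W : finType} {P : W -> R} (P_prob : prob_vec P).

Lemma prob_vec_le1 w : P w <= 1.
Proof.
by case: P_prob => P0 <-; rewrite (bigD1 w)//= lerDl sumr_ge0.
Qed.

Lemma prob_vec_sum_neq (w0 : W) :
  \sum_(w | (0 < P w) && (w != w0)) P w = 1 - P w0.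
Proof.
case: P_prob => P0 P1; rewrite -P1 [in RHS](bigD1 w0)//= [P w0 + _]addrC addrK.
rewrite [RHS](bigID (fun w => 0 < P w))/= [X in _ + X]big1 => [|w /andP[_]].
  by rewrite addr0; apply: eq_bigl => w; rewrite andbC.
by rewrite lt_neqAle P0 andbT negbK => /eqP.
Qed.

Lemma prob_vec_maxP : exists2 w0 : W, maxP P = P w0 & 0 < P w0.
Proof.
case: P_prob => P0 P1.
have [w1 Pw1] : exists w, 0 < P w.
  case: (pickP (fun w => 0 < P w)) => [w Pw|P_npos]; first by exists w.
  suff : \sum_(w : W) P w = 0 by rewrite P1 => /eqP; rewrite oner_eq0.
  by apply: big1 => w _; apply/eqP; rewrite eq_le P0 andbT leNgt P_npos.
exists [arg max_(w > w1) P w]%O; first by rewrite /maxP (bigmax_eq_arg _ w1).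
by case: arg_maxP => // w0 _ /(_ w1 isT); exact: lt_le_trans.
Qed.

Lemma integral_itv01_sqr_f1P_subr1_le :
  (\int[lebesgue_measure]_(y in `[0%R, 1%R]) ((f1P P y - 1) ^+ 2)%:E <=
    (2 * (#|W|%:R + 1) * (1 - maxP P))%:E)%E.
Proof.
have [w0 -> Pw0] := prob_vec_maxP.
pose e w := (P w)^-1 - 1.
have e0 w : 0 < P w -> 0 <= e w.
  by move=> Pw; rewrite subr_ge0 invf_ge1 ?prob_vec_le1.
have eK w : (e w + 1)^-1 = P w by rewrite subrK invrK.
pose Q w := (0 < P w) && (w != w0).
pose g y := \sum_(w | Q w) y `^ e w.
have fE y : f1P P y = y `^ e w0 + g y by rewrite /f1P (bigD1 w0).
have int_onem : (\int[lebesgue_measure]_(y in `[0%R, 1%R]) (1 - y `^ e w0)%:E =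
    (1 - P w0)%:E)%E by rewrite integral_itv01_onem_powR ?eK ?e0.
have int_g : (\int[lebesgue_measure]_(y in `[0%R, 1%R]) (g y)%:E =
    (1 - P w0)%:E)%E.
  rewrite integral_itv01_sum_powR => [|w /andP[/e0//]].
  by rewrite -(prob_vec_sum_neq w0); under eq_bigr do rewrite eK.
rewrite (_ : 2 * _ * _ = 2 * (1 - P w0) + 2 * #|W|%:R * (1 - P w0)); last by ring.
rewrite EFinD !EFinM -{1}int_onem -int_g.
have in01 (y : R) : y \in `[0%R, 1%R] -> 0 <= y <= 1 by rewrite in_itv.
apply: ge0_integral_le_lincomb => //.
- apply/measurable_funTS/measurable_funX/measurable_funB => //.
  exact: measurable_sum_powR.
- exact/measurable_funTS/measurable_funB.
- apply/measurable_funTS.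
  exact: measurable_sum_powR.
- by move=> y _; rewrite sqr_ge0.
- by move=> y /= /in01 ?; rewrite subr_ge0 powR_le1 ?e0.
- by move=> y _; apply: sumr_ge0 => w _; exact: powR_ge0.
- move=> y /= /in01 y01; rewrite fE; apply: sqr_add_subr1_le.
    by rewrite powR_ge0 powR_le1 ?e0.
  rewrite sumr_ge0 => [|w _]; last exact: powR_ge0.
  by apply: sum_powR_le_card => // w /andP[/e0].
Qed.

End prob_vec.

Theorem lemmaA4 :
  exists C : Rdefinitions.R, 0 < C /\
    forall (W : finType) (P : W -> Rdefinitions.R),
      prob_vec P ->
      (\int[@lebesgue_measure Rdefinitions.R]_(y in `[0%R, 1%R])
          (((f1P P y - 1) ^+ 2)%:E) <=
        ((C * #|W|%:R * (1 - maxP P))%:E))%E.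
Proof.
exists 4; split => // W P P_prob.
apply: le_trans (integral_itv01_sqr_f1P_subr1_le P_prob) _; rewrite lee_fin.
have [w0 -> _] := prob_vec_maxP P_prob.
have W_ge1 : 1 <= #|W|%:R :> Rdefinitions.R.
  by rewrite ler1n; apply/card_gt0P; exists w0.
by have := prob_vec_le1 P_prob w0; nra.
Qed.
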